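(* Every finite twin-free interval order $P=(X,\prec)$ has a closed interval representation $\{I(x)=[L(x),R(x)]:x\in X\}$ satisfying the following peeking property: for each pair $u,v\in X$ with $I(u)\subsetneq I(v)$, there exist $x,y\in X$ such that $x$ peeks into $vu$ from the left and $y$ peeks into $vu$ from the right.
   Context: Posets are strict (irreflexive) partial orders. Two points are twins if they have exactly the same comparabilities; $P$ is twin-free if no two distinct points are twins. $P$ is an interval order if there is an assignment of a closed real interval $I(x)=[L(x),R(x)]$ to each $x\in X$ (a closed interval representation) such that $x\prec y$ if and only if $R(x)<L(y)$. Given a representation and $u,v,x\in X$ with $I(u)\subsetneq I(v)$: $x$ peeks into $vu$ if $I(x)$ intersects $I(v)$ but not $I(u)$; it peeks into $vu$ from the left if moreover $R(x)\le L(u)$, and from the right if moreover $R(u)\le L(x)$. *)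

From mathcomp Require Import all_boot.
From Stdlib Require Import Reals.
Set Implicit Arguments. Unset Strict Implicit. Unset Printing Implicit Defensive.
Open Scope R_scope.

Definition strict_poset (X : Type) (lt : X -> X -> Prop) : Prop :=
  (forall x, ~ lt x x) /\ (forall x y z, lt x y -> lt y z -> lt x z).

Definition twins (X : Type) (lt : X -> X -> Prop) (x y : X) : Prop :=
  forall z, (lt x z <-> lt y z) /\ (lt z x <-> lt z y).

Definition twin_free (X : Type) (lt : X -> X -> Prop) : Prop :=
  forall x y, twins lt x y -> x = y.

Definition interval_rep (X : Type) (lt : X -> X -> Prop) (L Rt : X -> R) : Prop :=
  (forall x, L x <= Rt x) /\ (forall x y, lt x y <-> Rt x < L y).

Definition interval_order (X : Type) (lt : X -> X -> Prop) : Prop :=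
  exists L Rt : X -> R, interval_rep lt L Rt.

Definition in_I (X : Type) (L Rt : X -> R) (x : X) (t : R) : Prop :=
  L x <= t <= Rt x.

Definition strict_sub (X : Type) (L Rt : X -> R) (u v : X) : Prop :=
  (forall t, in_I L Rt u t -> in_I L Rt v t) /\ (exists t, in_I L Rt v t /\ ~ in_I L Rt u t).

Definition intersects (X : Type) (L Rt : X -> R) (x v : X) : Prop :=
  exists t, in_I L Rt x t /\ in_I L Rt v t.

Definition peeks (X : Type) (L Rt : X -> R) (x v u : X) : Prop :=
  intersects L Rt x v /\ ~ intersects L Rt x u.

Definition peeks_left (X : Type) (L Rt : X -> R) (x v u : X) : Prop :=
  peeks L Rt x v u /\ Rt x <= L u.

Definition peeks_right (X : Type) (L Rt : X -> R) (x v u : X) : Prop :=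
  peeks L Rt x v u /\ Rt u <= L x.

(* Number the points by the size of their down-sets: [down_rank x] counts the
   predecessors of [x], and [up_rank x] is the largest [down_rank] of a point
   not above [x].  Since down-sets of an interval order are nested, the
   intervals [down_rank x, up_rank x] represent the order, but strict
   containment of two of them may keep one endpoint fixed.  Breaking ties
   lexicographically (left endpoints by [up_rank], right endpoints by
   [down_rank]) makes strict containment strict at both ends, and then
   [down_rank v < down_rank u] yields a predecessor of [u] that is not below
   [v] (the left peeker), while [up_rank u < up_rank v] yields a successor of
   [u] that is not above [v] (the right peeker). *)

From mathcomp Require Import all_boot.
From Stdlib Require Import Reals.
From mathcomp Require Import zify.
From Stdlib Require Import Lia Lra Classical ClassicalEpsilon.
Set Implicit Arguments. Unset Strict Implicit.
Local Open Scope nat_scope.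

Section IntervalRepresentation.
Variables (X : Type) (lt : X -> X -> Prop) (L Rt : X -> R).
Hypothesis rep : interval_rep lt L Rt.
Local Open Scope R_scope.

Lemma interval_rep_irrefl x : ~ lt x x.
Proof. by case: rep => hLR hlt /hlt; have := hLR x; lra. Qed.

Lemma down_sets_nested w y :
  (forall z, lt z w -> lt z y) \/ (forall z, lt z y -> lt z w).
Proof.
case: rep => _ hlt; case: (Rle_dec (L w) (L y)) => hwy.
- by left=> z /hlt hz; apply/hlt; lra.
- by right=> z /hlt hz; apply/hlt; lra.
Qed.

Lemma intersects_sym x y : intersects L Rt x y -> intersects L Rt y x.
Proof. by case=> t [hx hy]; exists t. Qed.

Lemma lt_not_intersects x y : lt x y -> ~ intersects L Rt x y.
Proof. by case: rep => _ hlt /hlt hxy [t]; rewrite /in_I; lra. Qed.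

Lemma intersects_of_incomparable x y :
  ~ lt x y -> ~ lt y x -> intersects L Rt x y.
Proof.
case: rep => hLR hlt nxy nyx.
have hx := hLR x; have hy := hLR y.
have lxy : ~ Rt x < L y by move/hlt.
have lyx : ~ Rt y < L x by move/hlt.
case: (Rle_dec (L x) (L y)) => hl.
- by exists (L y); rewrite /in_I; lra.
- by exists (L x); rewrite /in_I; lra.
Qed.

Variables u v : X.
Hypothesis sub_uv : forall t, in_I L Rt u t -> in_I L Rt v t.

Lemma peeks_left_of_lt x : lt x u -> ~ lt x v -> peeks_left L Rt x v u.
Proof.
case: rep => hLR hlt xu nxv.
have := sub_uv (conj (Rle_refl (L u)) (hLR u)); rewrite /in_I => Lu_in_v.
have xu' := proj1 (hlt x u) xu.
split; last lra.
split; last exact: lt_not_intersects.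
apply: intersects_of_incomparable => // /hlt vx.
by have := hLR x; lra.
Qed.

Lemma peeks_right_of_lt y : lt u y -> ~ lt v y -> peeks_right L Rt y v u.
Proof.
case: rep => hLR hlt uy nvy.
have := sub_uv (conj (hLR u) (Rle_refl (Rt u))); rewrite /in_I => Ru_in_v.
have uy' := proj1 (hlt u y) uy.
split; last lra.
split; last by move/intersects_sym; apply: lt_not_intersects.
apply: intersects_of_incomparable => // /hlt yv.
by have := hLR y; have := hLR u; lra.
Qed.

End IntervalRepresentation.

Section Ranks.
Variables (X : finType) (lt : X -> X -> Prop).

Definition ltb x y : bool :=
  if excluded_middle_informative (lt x y) then true else false.

Lemma ltbP x y : reflect (lt x y) (ltb x y).
Proof. by rewrite /ltb; case: excluded_middle_informative => h; constructor. Qed.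

Definition down_rank x : nat := #|[pred z | ltb z x]|.

Definition up_rank x : nat := \max_(w | ~~ ltb x w) down_rank w.

Lemma down_rank_le_card x : down_rank x <= #|X|.
Proof. exact: max_card. Qed.

Lemma up_rank_le_card x : up_rank x <= #|X|.
Proof. by apply/bigmax_leqP => w _; apply: down_rank_le_card. Qed.

Lemma down_rank_le w y : (forall z, lt z w -> lt z y) -> down_rank w <= down_rank y.
Proof.
move=> sub_wy; apply: subset_leq_card; apply/subsetP => z.
by rewrite !inE => /ltbP/sub_wy/ltbP.
Qed.

Lemma exists_lt_not_lt u v :
  down_rank v < down_rank u -> exists x, lt x u /\ ~ lt x v.
Proof.
move=> ltvu; apply: NNPP => none; move: ltvu; apply/negP; rewrite -leqNgt.
by apply: down_rank_le => z zu; apply: NNPP => nzv; apply: none; exists z.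
Qed.

Lemma exists_gt_not_gt u v :
  up_rank u < up_rank v -> exists y, lt u y /\ ~ lt v y.
Proof.
move=> ltuv; apply: NNPP => none; move: ltuv; apply/negP; rewrite -leqNgt.
apply/bigmax_leqP => w /ltbP nvw; apply: leq_bigmax_cond; apply/ltbP => uw.
by apply: none; exists w.
Qed.

Variables (L Rt : X -> R).
Hypothesis rep : interval_rep lt L Rt.

Lemma down_rank_le_up_rank x : down_rank x <= up_rank x.
Proof. by apply: leq_bigmax_cond; apply/ltbP; apply: interval_rep_irrefl rep x. Qed.

Lemma lt_iff_up_rank_lt_down_rank x y : lt x y <-> up_rank x < down_rank y.
Proof.
split=> [xy | ]; last first.
  move=> h; apply: NNPP => nxy; move: h; apply/negP; rewrite -leqNgt.
  by apply: leq_bigmax_cond; apply/ltbP.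
have below_y w : ~~ ltb x w -> down_rank w < down_rank y.
  move/ltbP=> nxw; case: (down_sets_nested rep w y) => [sub_wy | sub_yw].
  - apply: proper_card; apply/properP; split.
      by apply/subsetP => z; rewrite !inE => /ltbP/sub_wy/ltbP.
    by exists x; rewrite !inE; apply/ltbP.
  - by case: nxw; apply: sub_yw.
have nxx : ~~ ltb x x by apply/ltbP; apply: interval_rep_irrefl rep x.
rewrite /up_rank (bigmax_eq_arg x nxx).
by case: arg_maxnP => // w nxw _; apply: below_y.
Qed.

End Ranks.

Lemma lexi_leq (K a b c d : nat) :
  b < K -> d < K -> K * a + b <= K * c + d -> a <= c /\ (a = c -> b <= d).
Proof. by move=> hb hd h; split; [nia | move=> eac; subst; lia]. Qed.

Section LexicographicEncoding.
Variables (X : Type) (lt : X -> X -> Prop) (d r : X -> nat) (N : nat).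
Hypotheses (d_lt_N : forall x, d x < N) (r_lt_N : forall x, r x < N).
Hypothesis d_le_r : forall x, d x <= r x.

(* [N + d x < 2 * N] and [r x < 2 * N], so both endpoints are lexicographic
   encodings in base [2 * N]; the offset [N] separates [Rt x] from [L y] when
   [r x = d y]. *)
Definition lexi_left x : R := INR (2 * N * d x + r x).
Definition lexi_right x : R := INR (2 * N * r x + (N + d x)).

Lemma lexi_interval_rep :
  (forall x y, lt x y <-> r x < d y) -> interval_rep lt lexi_left lexi_right.
Proof.
move=> lt_iff; split=> [x | x y].
  by apply: le_INR; apply/leP; have := d_lt_N x; have := d_le_r x; nia.
rewrite lt_iff /lexi_left /lexi_right; split=> h.
- by apply: lt_INR; apply/ltP; have := d_lt_N x; have := r_lt_N y; nia.
- by move/INR_lt/ltP: h; have := d_lt_N x; have := r_lt_N y; nia.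
Qed.

Lemma lexi_strict_sub u v :
  strict_sub lexi_left lexi_right u v -> d v < d u /\ r u < r v.
Proof.
case=> sub_uv [t [tv ntu]].
have LRu : (lexi_left u <= lexi_right u)%R.
  by apply: le_INR; apply/leP; have := d_lt_N u; have := d_le_r u; nia.
have := sub_uv _ (conj (Rle_refl _) LRu); rewrite /in_I => -[/INR_le/leP Lvu _].
have := sub_uv _ (conj LRu (Rle_refl _)); rewrite /in_I => -[_ /INR_le/leP Ruv].
have dN a : N + d a < 2 * N by have := d_lt_N a; lia.
have rN a : r a < 2 * N by have := r_lt_N a; lia.
have [dvu dv_eq] := lexi_leq (rN v) (rN u) Lvu.
have [ruv ru_eq] := lexi_leq (dN u) (dN v) Ruv.
have not_equal : ~ (d v = d u /\ r u = r v).
  move=> [ed er]; apply: ntu; move: tv.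
  by rewrite /in_I /lexi_left /lexi_right ed er.
split; rewrite ltn_neqAle ?dvu ?ruv andbT; apply/eqP => e; apply: not_equal.
- by split=> //; apply/eqP; rewrite eqn_leq ruv dv_eq.
- by split=> //; apply/eqP; rewrite eqn_leq dvu; have := ru_eq e; lia.
Qed.

End LexicographicEncoding.

Theorem theorem11 (X : finType) (lt : X -> X -> Prop) :
  strict_poset lt -> twin_free lt -> interval_order lt ->
  exists L Rt : X -> R,
    interval_rep lt L Rt /\
    (forall u v : X, strict_sub L Rt u v ->
       (exists x, peeks_left L Rt x v u) /\ (exists y, peeks_right L Rt y v u)).
Proof.
(* The order axioms follow from the representation, and twins receive equal
   intervals, so only [interval_order] is needed. *)
move=> _ _ [L1 [R1 rep1]].
have d_lt_N x : down_rank lt x < #|X|.+1 by rewrite ltnS down_rank_le_card.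
have r_lt_N x : up_rank lt x < #|X|.+1 by rewrite ltnS up_rank_le_card.
have rep := lexi_interval_rep d_lt_N r_lt_N (down_rank_le_up_rank rep1)
  (lt_iff_up_rank_lt_down_rank rep1).
exists (lexi_left (down_rank lt) (up_rank lt) #|X|.+1),
       (lexi_right (down_rank lt) (up_rank lt) #|X|.+1).
split=> // u v uv.
have [dvu ruv] := lexi_strict_sub d_lt_N r_lt_N (down_rank_le_up_rank rep1) uv.
split.
- have [x [xu nxv]] := exists_lt_not_lt dvu.
  by exists x; exact (peeks_left_of_lt rep (proj1 uv) xu nxv).
- have [y [uy nvy]] := exists_gt_not_gt ruv.
  by exists y; exact (peeks_right_of_lt rep (proj1 uv) uy nvy).
Qed.
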